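(* Let $t\ge 3$ and $\Delta\ge 4$ be integers, and let $P_t$ be a path with vertices $p_1,\dots,p_t$. Form an intermediate tree by appending onto every vertex $p_j$ of the path $\Delta-2$ copies of the $\Delta$-star (each identified by one of its leaves with $p_j$). Then, for each $j$, subdivide a single edge between $p_j$ and an adjacent support vertex (center of one of the stars appended at $p_j$). Let $T_{t,\Delta}$ be the resulting tree and $n$ its order. Then \[\gamma^{\rm ID}(T_{t,\Delta}) = \left(\frac{\Delta-1+\frac{1}{\Delta-2}}{\Delta+\frac{2}{\Delta-2}}\right)n > \left(\frac{\Delta-1}{\Delta}\right)n-\frac{n}{\Delta^2}.\]
   Context: An identifying code of a graph $G$ is a set $C\subseteq V(G)$ such that every vertex $v$ has $N[v]\cap C\neq\emptyset$ and for all distinct $u,v$, $N[u]\cap C \ne N[v]\cap C$, where $N[v]$ is the closed neighborhood; $\gamma^{\rm ID}(G)$ is its minimum size. A $\Delta$-star is $K_{1,\Delta}$. *)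

From mathcomp Require Import all_boot all_order all_algebra.
Set Implicit Arguments. Unset Strict Implicit. Unset Printing Implicit Defensive.

Section IdCodes.
Variable V : finType.
Variable adj : rel V.

Definition cnbhd (v : V) : {set V} := [set u | (u == v) || adj v u].

Definition is_idcode (C : {set V}) : bool :=
  [forall v, cnbhd v :&: C != set0] &&
  [forall u, forall v, (u != v) ==> (cnbhd u :&: C != cnbhd v :&: C)].

(* gamma^ID: minimum size of an identifying code (default #|V|.+1 if none exists) *)
Definition gammaID : nat :=
  \big[minn/#|V|.+1]_(C : {set V} | is_idcode C) #|C|.
End IdCodes.

(* A vertex is (j, x) with j : 'I_t the index of the path vertex p_j and
   x = inl (inl tt)      : p_j itself
     = inl (inr tt)      : the subdivision vertex on the edge p_j -- c_{j,0}
     = inr (inl k)       : centre c_{j,k} of the k-th appended Delta-star (k < Delta-2)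
     = inr (inr (k, l))  : the l-th remaining leaf of that star (l < Delta-1);
   the Delta-th leaf of every star at p_j is identified with p_j.  Star 0 is the
   one whose edge to p_j is subdivided. *)
Definition Tvtx (t D : nat) : finType :=
  ('I_t * ((unit + unit) + ('I_(D - 2) + 'I_(D - 2) * 'I_(D - 1))))%type.

Definition Tedge (t D : nat) (a b : Tvtx t D) : bool :=
  match a.2, b.2 with
  | inl (inl _), inl (inl _) => (val a.1).+1 == val b.1
  | inl (inl _), inl (inr _) => a.1 == b.1
  | inl (inr _), inr (inl k) => (a.1 == b.1) && (val k == 0)
  | inl (inl _), inr (inl k) => (a.1 == b.1) && (val k != 0)
  | inr (inl k), inr (inr (k', _)) => (a.1 == b.1) && (k == k')
  | _, _ => false
  end.

Definition Tadj (t D : nat) : rel (Tvtx t D) :=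
  fun a b => Tedge a b || Tedge b a.

From mathcomp Require Import all_boot all_order all_algebra zify.
From mathcomp.algebra_tactics Require Import ring lra.
Set Implicit Arguments. Unset Strict Implicit. Unset Printing Implicit Defensive.
Import Order.TTheory.

(* Two leaves missing from an identifying code would have the same trace, and a
   missing leaf forces its center into the code, so every star contains at least
   Delta-1 code vertices.  For the star whose edge to p_j is subdivided, if
   neither p_j nor the subdivision vertex s_j is in the code, then s_j is
   dominated only by the center, hence all leaves of that star are in the code:
   this block contains at least Delta code vertices.  So gamma^ID is at least
   t((Delta-2)(Delta-1)+1), and deleting the p_j and one leaf per star from the
   vertex set gives an identifying code of exactly that size.  The formula is
   this count divided by n = t(Delta + (Delta-2)(Delta-1)). *)

Lemma setU1I_notin (T : finType) (x : T) (A C : {set T}) :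
  x \notin C -> (x |: A) :&: C = A :&: C.
Proof.
move=> xC; apply/setP => y; rewrite !inE.
by case: eqVneq => // ->; rewrite (negbTE xC) !andbF.
Qed.

Section IdentifyingCodes.
Variables (V : finType) (adj : rel V).
Local Notation N := (cnbhd adj).

Lemma idcodeP (C : {set V}) :
  reflect ((forall v, N v :&: C != set0) /\ injective (fun v => N v :&: C))
          (is_idcode adj C).
Proof.
apply: (iffP andP) => [[/forallP dom /forallP sep] | [dom inj]]; split => //.
- move=> u v /= /eqP; apply: contraTeq => uv.
  by have /forallP /(_ v) /implyP /(_ uv) := sep u.
- by apply/forallP.
- by do 2!apply/forallP => ?; apply/implyP; apply: contraNneq => /inj ->.
Qed.

Lemma separated_traces (C : {set V}) u v w :
  w \in C -> (w \in N u) != (w \in N v) -> N u :&: C != N v :&: C.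
Proof. by move=> wC; apply: contra => /eqP /setP /(_ w); rewrite !inE wC !andbT => ->. Qed.

Lemma gammaID_min (C : {set V}) :
  is_idcode adj C -> (forall C', is_idcode adj C' -> #|C| <= #|C'|) ->
  gammaID adj = #|C|.
Proof.
move=> Cid Cmin; apply/eqP; rewrite /gammaID eqn_leq -!leEnat -!minEnat.
by rewrite (bigmin_le_cond _ _ Cid) le_bigmin // leEnat leqW ?max_card.
Qed.

Lemma mem_idcode_sole_dominator (C : {set V}) v c :
  is_idcode adj C -> N v :&: C = [set c] :&: C -> c \in C.
Proof.
case/idcodeP => dom _ NvC; have /set0Pn [w] := dom v.
by rewrite NvC !inE => /andP [/eqP <-].
Qed.

Lemma card_pendant_leaves_idcode (C L : {set V}) c :
  is_idcode adj C -> c \notin L -> {in L, forall l, N l = [set l; c]} ->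
  #|L| <= #|(c |: L) :&: C|.
Proof.
move=> Cid cL NL; have /idcodeP [_ inj] := Cid.
have [LC | /subsetPn [l0 Ll0 l0C]] := boolP (L \subset C).
  by rewrite -{1}(setIidPl LC) subset_leq_card // setSI // subsetUr.
have trace_l0 : N l0 :&: C = [set c] :&: C by rewrite NL // setU1I_notin.
have cC : c \in C := mem_idcode_sole_dominator Cid trace_l0.
have LC : {in L, forall l, l != l0 -> l \in C}.
  move=> l Ll; apply: contraNT => lC; apply/eqP/inj.
  by rewrite /= trace_l0 NL // setU1I_notin.
have -> : #|L| = #|c |: (L :\ l0)|.
  by rewrite cardsU1 (cardsD1 l0 L) Ll0 !inE (negbTE cL) andbF.
apply: subset_leq_card; apply/subsetP => v; rewrite !inE.
by case/orP => [/eqP -> | /andP [vl0 vL]]; rewrite ?eqxx ?cC // vL LC ?orbT.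
Qed.

Lemma card_subdivided_pendant_idcode (C L : {set V}) c s p :
  is_idcode adj C -> c \notin L -> {in L, forall l, N l = [set l; c]} ->
  s \notin c |: L -> p \notin c |: L -> N s = [set s; p; c] ->
  #|L|.+1 <= #|(s |: (p |: (c |: L))) :&: C|.
Proof.
move=> Cid cL NL sL pL Ns.
have star := card_pendant_leaves_idcode Cid cL NL.
have [/orP spC | /norP [sC pC]] := boolP ((s \in C) || (p \in C)).
  apply: leq_ltn_trans star (proper_card _).
  apply/properP; split; first by rewrite setSI // (subset_trans _ (subsetUr [set s] _)) ?subsetUr.
  by case: spC => [sC | pC]; [exists s | exists p];
    rewrite in_setI ?sC ?pC andbT ?(negbTE sL) ?(negbTE pL) // !inE eqxx ?orbT.
have /idcodeP [_ inj] := Cid.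
have trace_s : N s :&: C = [set c] :&: C by rewrite Ns -setUA !setU1I_notin.
have cC : c \in C := mem_idcode_sole_dominator Cid trace_s.
have LC : L \subset C.
  apply/subsetP => l Ll; apply: contraNT sL => lC.
  have -> : s = l by apply/inj; rewrite /= trace_s NL // setU1I_notin.
  by rewrite !inE Ll orbT.
apply: leq_trans (subset_leq_card (setSI C (subsetUr [set s] _))).
apply: leq_trans (subset_leq_card (setSI C (subsetUr [set p] _))).
by rewrite (setIidPl _) ?cardsU1 ?cL // subUset sub1set cC LC.
Qed.
End IdentifyingCodes.

Lemma inl_eq (A B : eqType) (a a' : A) : (@inl A B a == inl a') = (a == a').
Proof. by []. Qed.

Lemma inr_eq (A B : eqType) (b b' : B) : (@inr A B b == inr b') = (b == b').
Proof. by []. Qed.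

Lemma inl_eq_inr (A B : eqType) (a : A) (b : B) : (inl a == inr b) = false.
Proof. by []. Qed.

Lemma inr_eq_inl (A B : eqType) (a : A) (b : B) : (inr b == inl a) = false.
Proof. by []. Qed.

Definition eq_sumE := (inl_eq, inr_eq, inl_eq_inr, inr_eq_inl).

Section Tree.
Variables t D : nat.
Hypothesis D_ge4 : (4 <= D)%N.
Local Notation V := (Tvtx t D).
Local Notation N := (cnbhd (@Tadj t D)).

Local Notation path_vtx j := (j, inl (inl tt)).
Local Notation subdiv_vtx j := (j, inl (inr tt)).
Local Notation center j k := (j, inr (inl k)).
Local Notation leaf j k l := (j, inr (inr (k, l))).

Ltac vtx_simpl := rewrite ?(xpair_eqE, eq_sumE, andbF, andbT, orbF, eqxx) /=.
Ltac nbhd_simpl := rewrite /cnbhd !inE /Tadj /Tedge /=; vtx_simpl.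

Lemma cnbhd_leaf j k l : N (leaf j k l) = [set leaf j k l; center j k].
Proof.
by apply/setP => -[j' [[[]|[]]|[k'|[k' l']]]]; nbhd_simpl.
Qed.

Lemma first_star_subproof : (0 < D - 2)%N. Proof. lia. Qed.
Definition first_star : 'I_(D - 2) := Ordinal first_star_subproof.

Lemma cnbhd_subdiv j :
  N (subdiv_vtx j) = [set subdiv_vtx j; path_vtx j; center j first_star].
Proof.
by apply/setP => -[j' [[[]|[]]|[k'|[k' l']]]]; nbhd_simpl; rewrite ?(eq_sym j).
Qed.

Definition star_of (v : V) : 'I_t * 'I_(D - 2) :=
  match v with
  | (j, inl _) => (j, first_star)
  | (j, inr (inl k)) | (j, inr (inr (k, _))) => (j, k)
  end.

Definition star_part j k : {set V} := [set v | star_of v == (j, k)].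

Definition leaves j k : {set V} := [set leaf j k l | l : 'I_(D - 1)].

Lemma mem_leaves j k v :
  (v \in leaves j k) = if v is leaf j' k' _ then (j' == j) && (k' == k) else false.
Proof.
apply/imsetP/idP => [[l _ ->] | ]; first by rewrite !eqxx.
by case: v => j' [[[]|[]]|[k'|[k' l]]] // /andP [/eqP -> /eqP ->]; exists l.
Qed.

Lemma card_leaves j k : #|leaves j k| = D - 1.
Proof. by rewrite card_imset ?card_ord // => l l' [->]. Qed.

Lemma star_partE j k :
  k != first_star -> star_part j k = center j k |: leaves j k.
Proof.
move=> kk0; apply/setP => -[j' [[[]|[]]|[k'|[k' l']]]];
  by rewrite !inE mem_leaves /=; vtx_simpl; rewrite // (eq_sym first_star) (negbTE kk0) andbF.
Qed.

Lemma first_star_partE j :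
  star_part j first_star =
  subdiv_vtx j |: (path_vtx j |: (center j first_star |: leaves j first_star)).
Proof.
by apply/setP => -[j' [[[]|[]]|[k'|[k' l']]]]; rewrite !inE mem_leaves /=; vtx_simpl.
Qed.

Section LowerBound.
Variable C : {set V}.
Hypothesis C_id : is_idcode (@Tadj t D) C.

Lemma center_notin_leaves j k : center j k \notin leaves j k.
Proof. by rewrite mem_leaves. Qed.

Lemma leaves_pendant j k : {in leaves j k, forall l, N l = [set l; center j k]}.
Proof.
move=> v; rewrite mem_leaves.
by case: v => j' [[[]|[]]|[k'|[k' l]]] // /andP [/eqP -> /eqP ->]; rewrite cnbhd_leaf.
Qed.

Lemma card_star_part_idcode j k :
  k != first_star -> (D - 1 <= #|star_part j k :&: C|)%N.
Proof.
move=> kk0; rewrite star_partE //.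
have := card_pendant_leaves_idcode C_id (@center_notin_leaves j k) (@leaves_pendant j k).
by rewrite card_leaves.
Qed.

Lemma card_first_star_part_idcode j : (D <= #|star_part j first_star :&: C|)%N.
Proof.
have := card_subdivided_pendant_idcode C_id (@center_notin_leaves j first_star)
  (@leaves_pendant j first_star) _ _ (cnbhd_subdiv j).
rewrite first_star_partE card_leaves !inE !mem_leaves /=; vtx_simpl.
by move=> /(_ isT isT); apply: leq_trans; rewrite subn1 prednK // (leq_trans _ D_ge4).
Qed.

Lemma card_by_stars : #|C| = \sum_j \sum_k #|star_part j k :&: C|.
Proof.
rewrite -sum1_card (partition_big star_of xpredT) //= pair_big /=.
apply: eq_bigr => -[j k] _; rewrite sum1_card; apply: eq_card => v.
by rewrite !inE andbC.
Qed.

Lemma card_idcode_ge : (t * ((D - 2) * (D - 1) + 1) <= #|C|)%N.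
Proof.
rewrite card_by_stars -[t in (t * _)%N]card_ord -sum_nat_const; apply: leq_sum => j _.
rewrite (bigD1 first_star) //=.
apply: (@leq_trans (D + \sum_(k | k != first_star) (D - 1))).
  by rewrite sum_nat_const cardC1 card_ord; lia.
apply: leq_add; first exact: card_first_star_part_idcode.
by apply: leq_sum => k; apply: card_star_part_idcode.
Qed.
End LowerBound.

Lemma last_leaf_subproof : (D - 2 < D - 1)%N. Proof. lia. Qed.
Definition last_leaf : 'I_(D - 1) := Ordinal last_leaf_subproof.

Definition outside_code (x : 'I_t * option 'I_(D - 2)) : V :=
  if x.2 is Some k then leaf x.1 k last_leaf else path_vtx x.1.

Definition code : {set V} := ~: [set outside_code x | x : 'I_t * option 'I_(D - 2)].

Lemma in_code v : (v \in code) =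
  match v with
  | (_, inl (inl _)) => false
  | (_, inr (inr (_, l))) => l != last_leaf
  | _ => true
  end.
Proof.
rewrite inE; case: v => j [[[]|[]]|[k|[k l]]].
- by apply/negbF/imsetP; exists (j, None).
- by apply/negP => /imsetP [[j' [k'|]] _].
- by apply/negP => /imsetP [[j' [k'|]] _].
- congr (~~ _); apply/imsetP/eqP => [[[j' [k'|]] _ //= [_ _ ->]] // | ->].
  by exists (j, Some k).
Qed.

Lemma outside_code_inj : injective outside_code.
Proof. by move=> [j [k|]] [j' [k'|]] //= => [[-> ->] | [->]]. Qed.

Lemma card_Tvtx : #|V| = (t * (D + (D - 2) * (D - 1)))%N.
Proof.
rewrite card_prod !card_sum !card_unit card_prod !card_ord.
congr (t * _)%N; lia.
Qed.

Lemma card_code : #|code| = (t * ((D - 2) * (D - 1) + 1))%N.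
Proof.
rewrite cardsCs setCK card_imset ?card_Tvtx; last exact: outside_code_inj.
rewrite card_prod card_option !card_ord -mulnBr; congr (t * _)%N; nia.
Qed.

(* Since D >= 4, every star has two leaves besides [last_leaf] in the code;
   one of them separates the center of the star from any of its leaves. *)
Lemma leaf0_subproof : (0 < D - 1)%N. Proof. lia. Qed.
Lemma leaf1_subproof : (1 < D - 1)%N. Proof. lia. Qed.
Definition leaf0 : 'I_(D - 1) := Ordinal leaf0_subproof.
Definition leaf1 : 'I_(D - 1) := Ordinal leaf1_subproof.

Lemma leaf0_neq_last : leaf0 != last_leaf.
Proof. by apply/negP => /eqP /(congr1 val) /=; lia. Qed.

Lemma leaf1_neq_last : leaf1 != last_leaf.
Proof. by apply/negP => /eqP /(congr1 val) /=; lia. Qed.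

Definition vtx_kind (v : V) : nat :=
  match v.2 with inl (inl _) => 0 | inl (inr _) => 1 | inr (inl _) => 2 | inr (inr _) => 3 end.

Lemma code_separates u v : u != v -> (vtx_kind u <= vtx_kind v)%N ->
  exists2 w, w \in code & (w \in N u) != (w \in N v).
Proof.
case: u => j [[[]|[]]|[k|[k l]]]; case: v => j' [[[]|[]]|[k'|[k' l']]] //= uv _;
  move: uv; vtx_simpl => uv.
- by exists (subdiv_vtx j); [rewrite in_code | nbhd_simpl; rewrite (eq_sym j') uv].
- by exists (center j' first_star); [rewrite in_code | nbhd_simpl].
- by exists (leaf j' k' leaf0); [rewrite in_code leaf0_neq_last | nbhd_simpl].
- by exists (subdiv_vtx j); [rewrite in_code | nbhd_simpl].
- by exists (subdiv_vtx j); [rewrite in_code | nbhd_simpl; rewrite uv].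
- by exists (leaf j' k' leaf0); [rewrite in_code leaf0_neq_last | nbhd_simpl].
- by exists (subdiv_vtx j); [rewrite in_code | nbhd_simpl].
- by exists (leaf j k leaf0);
    [rewrite in_code leaf0_neq_last | nbhd_simpl; rewrite (eq_sym j') (eq_sym k') (negbTE uv)].
- exists (leaf j k (if l' == leaf0 then leaf1 else leaf0)).
    by rewrite in_code; case: ifP; rewrite ?leaf0_neq_last ?leaf1_neq_last.
  have other : (if l' == leaf0 then leaf1 else leaf0) != l'.
    by case: (eqVneq l' leaf0) => [-> | ]; rewrite // eq_sym.
  by nbhd_simpl; rewrite (negbTE other) !andbF.
- have [l_in | /negPn /eqP l_last] := boolP (l != last_leaf).
    by exists (leaf j k l); [rewrite in_code | nbhd_simpl; rewrite (negbTE uv)].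
  have [l'_in | /negPn /eqP l'_last] := boolP (l' != last_leaf).
    by exists (leaf j' k' l');
      [rewrite in_code | nbhd_simpl; rewrite (eq_sym j') (eq_sym k') (eq_sym l') (negbTE uv)].
  move: uv; rewrite l_last l'_last eqxx andbT => uv.
  by exists (center j k); [rewrite in_code | nbhd_simpl; rewrite (negbTE uv)].
Qed.

Lemma code_is_idcode : is_idcode (@Tadj t D) code.
Proof.
apply/idcodeP; split.
  move=> v; apply/set0Pn; case: v => j [[[]|[]]|[k|[k l]]];
    [exists (subdiv_vtx j) | exists (subdiv_vtx j) | exists (center j k) | exists (center j k)];
    by rewrite in_setI in_code andbT; nbhd_simpl.
move=> u v /eqP; apply: contraTeq => uv.
wlog uv_kind : u v uv / (vtx_kind u <= vtx_kind v)%N.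
  move=> sep; have [|/ltnW vu_kind] := leqP (vtx_kind u) (vtx_kind v); first exact: sep.
  by rewrite eq_sym sep // eq_sym.
have [w w_code w_sep] := code_separates uv uv_kind.
exact: separated_traces w_code w_sep.
Qed.

Lemma gammaID_tree : gammaID (@Tadj t D) = (t * ((D - 2) * (D - 1) + 1))%N.
Proof.
rewrite -card_code; apply: gammaID_min code_is_idcode _ => C C_id.
by rewrite card_code card_idcode_ge.
Qed.
End Tree.

Import GRing.Theory Num.Theory.
Local Open Scope ring_scope.

Section Ratio.
Variables (R : realFieldType) (d : R).
Hypothesis d_gt2 : 2 < d.

Let d2_gt0 : 0 < d - 2. Proof. by rewrite subr_gt0. Qed.
Let d_gt0 : 0 < d. Proof. by rewrite (lt_trans _ d_gt2). Qed.
Lemma ratio_denom_gt0 : 0 < d + (d - 2) * (d - 1). Proof. nra. Qed.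

Lemma tree_ratioE :
  (d - 1 + 1 / (d - 2)) / (d + 2 / (d - 2)) =
  ((d - 2) * (d - 1) + 1) / (d + (d - 2) * (d - 1)).
Proof. by field; rewrite ?(gt_eqF d2_gt0) ?(gt_eqF ratio_denom_gt0). Qed.

Lemma tree_ratio_gt :
  (d - 1) / d - 1 / d ^+ 2 < ((d - 2) * (d - 1) + 1) / (d + (d - 2) * (d - 1)).
Proof.
rewrite -subr_gt0.
have -> : ((d - 2) * (d - 1) + 1) / (d + (d - 2) * (d - 1)) - ((d - 1) / d - 1 / d ^+ 2)
          = 2 / (d ^+ 2 * (d + (d - 2) * (d - 1))).
  by field; rewrite ?(gt_eqF d_gt0) ?(gt_eqF ratio_denom_gt0).
by rewrite divr_gt0 // mulr_gt0 ?exprn_gt0 ?ratio_denom_gt0.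
Qed.
End Ratio.

Unset Implicit Arguments.
Theorem mainTheorem18 (t D : nat) (ht : (3 <= t)%N) (hD : (4 <= D)%N) :
  let n : rat := (#|Tvtx t D|)%:R in
  let d : rat := D%:R in
  ((gammaID (@Tadj t D))%:R : rat)
    = ((d - 1 + 1 / (d - 2)) / (d + 2 / (d - 2))) * n
  /\ ((d - 1 + 1 / (d - 2)) / (d + 2 / (d - 2))) * n > ((d - 1) / d) * n - n / (d ^+ 2).
Proof.
move=> n d.
have d_gt2 : 2 < d by rewrite ltr_nat (leq_trans _ hD).
have n_gt0 : 0 < n by rewrite /n ltr0n card_Tvtx //; nia.
have gammaE : (gammaID (@Tadj t D))%:R =
              ((d - 2) * (d - 1) + 1) / (d + (d - 2) * (d - 1)) * n.
  rewrite gammaID_tree // /n card_Tvtx // !natrM !natrD natrM !natrB ?(leq_trans _ hD) //.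
  by rewrite -/d mulrCA divfK // gt_eqF ?ratio_denom_gt0.
rewrite tree_ratioE // -gammaE; split=> //.
have := tree_ratio_gt d_gt2; rewrite -(ltr_pM2r n_gt0) mulrBl mul1r.
by rewrite gammaE [n / _]mulrC.
Qed.
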